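(* Let $0,1,\dots,9$ be points of $\mathbb{P}^3(\mathbb{C})$ with fixed representative vectors. Assume that (i) the vector space of quadratic forms vanishing at the six points $0,\dots,5$ has dimension $4$, and (ii) $[0125][0234][1345]-[0124][2345][0135]\neq 0$. Let $M$ be the $4\times 4$ matrix whose row indexed by $j\in\{6,7,8,9\}$ is $$\big([015j][234j],\ [012j][345j],\ [024j][135j],\ [045j][123j]\big).$$ Then the ten points lie on a common quadric surface (the zero set of a nonzero quadratic form) if and only if $\det M=0$.
   Context: $[abcd]$ denotes the determinant of the $4\times4$ matrix whose columns are the chosen representative vectors of the points $a,b,c,d$. A quadric surface is the zero locus in $\mathbb{P}^3$ of a nonzero homogeneous polynomial of degree $2$ in four variables. *)

From HB Require Import structures.
From mathcomp Require Import all_boot all_order all_algebra.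
From mathcomp Require Import complex.
From mathcomp Require Import reals.
Set Implicit Arguments. Unset Strict Implicit. Unset Printing Implicit Defensive.
Import Order.TTheory GRing.Theory Num.Theory.
Local Open Scope ring_scope.

Section Defs.
Variable F : fieldType.

(* Monomials of degree 2 in 4 variables x_0..x_3: pairs (i,j) with i <= j. *)
Definition mon2 := {ij : 'I_4 * 'I_4 | (ij.1 <= ij.2)%N}.
Definition nmon2 := #|{: mon2}|.

Definition monval (k : 'I_nmon2) (x : 'cV[F]_4) : F :=
  let ij := val (enum_val k : mon2) in x ij.1 0 * x ij.2 0.

(* A quadratic form = its coefficient vector in the monomial basis. *)
Definition quadform (c : 'rV[F]_nmon2) (x : 'cV[F]_4) : F :=
  \sum_(k < nmon2) c 0 k * monval k x.

(* Evaluation matrix of the points p 0, ..., p (m-1): u *m evalmx = 0 iff the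
   quadratic form u vanishes at each of those points. *)
Definition evalmx (m : nat) (p : 'I_10 -> 'cV[F]_4) : 'M[F]_(nmon2, m) :=
  \matrix_(k, i) monval k (p (inord i)).

Definition pt (p : 'I_10 -> 'cV[F]_4) (a : nat) : 'cV[F]_4 := p (inord a).

Definition br (p : 'I_10 -> 'cV[F]_4) (a b c d : nat) : F :=
  \det (\matrix_(i < 4, j < 4) ([:: pt p a; pt p b; pt p c; pt p d]`_j) i 0).

Definition Mmx (p : 'I_10 -> 'cV[F]_4) : 'M[F]_4 :=
  \matrix_(r < 4, s < 4)
    (let j := (r + 6)%N in
     [:: br p 0 1 5 j * br p 2 3 4 j; br p 0 1 2 j * br p 3 4 5 j;
         br p 0 2 4 j * br p 1 3 5 j; br p 0 4 5 j * br p 1 2 3 j]`_s).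
End Defs.

From HB Require Import structures.
From mathcomp Require Import all_boot all_order all_algebra.
From mathcomp Require Import complex reals.
From mathcomp Require Import ring.
Set Implicit Arguments. Unset Strict Implicit. Unset Printing Implicit Defensive.
Import Order.TTheory GRing.Theory Num.Theory.
Local Open Scope ring_scope.

(* The products of two planes
     Q_0 = [0 1 5 x][2 3 4 x],  Q_1 = [0 1 2 x][3 4 5 x],
     Q_2 = [0 2 4 x][1 3 5 x],  Q_3 = [0 4 5 x][1 2 3 x]
   are quadrics through the points 0..5, and the row of M indexed by j lists
   their values at the point j.  Once Q_0..Q_3 are linearly independent, they
   span the 4-dimensional space of quadrics through 0..5, so a quadric through
   all ten points is a nonzero combination sum_s a_s Q_s whose coefficient
   vector is killed by M; such a vector exists iff det M = 0.
   Independence: evaluating a relation sum_s a_s Q_s = 0 at p_i + p_j leaves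
   a two-term equation between two coefficients for every pair {i, j} lying
   in a plane of two of the Q_s.  By Grassmann-Plucker relations, Cramer's
   rule on these small systems yields [0134] II a = 0, [1245] II a = 0 and
   [1234] II a_3 = 0, where II is the polynomial of hypothesis (ii).  If
   [0134] = [1245] = 0, a Plucker relation makes [1234] nonzero along with
   the three brackets of a nonzero term of II, and these force a = 0. *)

Section LinearCombinations.
Variable R : comNzRingType.

Lemma eq_lincomb2 (x y c1 c2 l1 r1 l2 r2 : R) :
  l1 = r1 -> l2 = r2 -> x - y = c1 * (l1 - r1) + c2 * (l2 - r2) -> x = y.
Proof. by move=> -> ->; rewrite !subrr !mulr0 addr0 => /subr0_eq. Qed.

Lemma eq_lincomb3 (x y c1 c2 c3 l1 r1 l2 r2 l3 r3 : R) :
  l1 = r1 -> l2 = r2 -> l3 = r3 ->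
  x - y = c1 * (l1 - r1) + c2 * (l2 - r2) + c3 * (l3 - r3) -> x = y.
Proof. by move=> -> -> ->; rewrite !subrr !mulr0 !addr0 => /subr0_eq. Qed.

End LinearCombinations.

Lemma cramer2 (R : idomainType) (u v u' v' d x y : R) :
  u * x = v * y -> u' * x = v' * y -> u * v' - v * u' = d -> d != 0 ->
  x = 0 /\ y = 0.
Proof.
move=> e e' <- d0; split; apply: (mulfI d0); rewrite mulr0.
  by apply: (@eq_lincomb2 _ _ _ v' (- v) _ _ _ _ e e'); ring.
by apply: (@eq_lincomb2 _ _ _ u' (- u) _ _ _ _ e e'); ring.
Qed.

Section Bracket.
Variable R : comNzRingType.
Implicit Types u v w x y : 'cV[R]_4.

Definition bracket u v w x : R :=
  \det (\matrix_(i < 4, j < 4) ([:: u; v; w; x]`_j) i 0).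

Local Notation co x k := (x (inord k) 0).

Lemma bracketE u v w x : bracket u v w x =
    co u 0*co v 1*co w 2*co x 3 - co u 0*co v 1*co x 2*co w 3 - co u 0*co w 1*co v 2*co x 3
  + co u 0*co w 1*co x 2*co v 3 + co u 0*co x 1*co v 2*co w 3 - co u 0*co x 1*co w 2*co v 3
  - co v 0*co u 1*co w 2*co x 3 + co v 0*co u 1*co x 2*co w 3 + co v 0*co w 1*co u 2*co x 3
  - co v 0*co w 1*co x 2*co u 3 - co v 0*co x 1*co u 2*co w 3 + co v 0*co x 1*co w 2*co u 3
  + co w 0*co u 1*co v 2*co x 3 - co w 0*co u 1*co x 2*co v 3 - co w 0*co v 1*co u 2*co x 3
  + co w 0*co v 1*co x 2*co u 3 + co w 0*co x 1*co u 2*co v 3 - co w 0*co x 1*co v 2*co u 3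
  - co x 0*co u 1*co v 2*co w 3 + co x 0*co u 1*co w 2*co v 3 + co x 0*co v 1*co u 2*co w 3
  - co x 0*co v 1*co w 2*co u 3 - co x 0*co w 1*co u 2*co v 3 + co x 0*co w 1*co v 2*co u 3.
Proof.
rewrite /bracket.
have -> : \matrix_(i < 4, j < 4) ([:: u; v; w; x]`_j) i 0 =
          \matrix_(i < 4, j < 4) (fun a b : nat => co [:: u; v; w; x]`_b a) i j.
  by apply/matrixP => i j; rewrite !mxE inord_val.
do 3 rewrite !(expand_det_row _ ord0) !big_ord_recl !big_ord0 /= /cofactor.
rewrite !det_mx11 !mxE /= /bump /= ?add0n ?addn0 ?add1n /=.
ring.
Qed.

Lemma bracket_dup1 u v w : bracket u v w u = 0. Proof. rewrite bracketE; ring. Qed.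
Lemma bracket_dup2 u v w : bracket u v w v = 0. Proof. rewrite bracketE; ring. Qed.
Lemma bracket_dup3 u v w : bracket u v w w = 0. Proof. rewrite bracketE; ring. Qed.

Definition bracket_form u v w : 'rV[R]_4 :=
  \row_i cofactor (\matrix_(i < 4, j < 4) ([:: u; v; w; 0]`_j) i 0) i ord_max.

Lemma bracket_formE u v w x : bracket u v w x = (bracket_form u v w *m x) 0 0.
Proof.
rewrite /bracket (expand_det_col _ ord_max) mxE; apply: eq_bigr => i _.
rewrite !mxE mulrC; congr (_ * _); rewrite /cofactor; congr (_ * \det _).
by apply/matrixP => a [[|[|[|//]]] b]; rewrite !mxE.
Qed.

Lemma bracketD u v w x y : bracket u v w (x + y) = bracket u v w x + bracket u v w y.
Proof. by rewrite !bracket_formE mulmxDr mxE. Qed.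

End Bracket.

Section QuadraticForms.
Variable F : fieldType.
Implicit Types (l m : 'rV[F]_4) (x : 'cV[F]_4) (c : 'rV[F]_nmon2).

Definition qvec l m : 'rV[F]_nmon2 := \row_k
  (let ij := val (enum_val k : mon2) in
   if ij.1 == ij.2 then l 0 ij.1 * m 0 ij.1
   else l 0 ij.1 * m 0 ij.2 + l 0 ij.2 * m 0 ij.1).

Lemma sum_mon2 (G : 'I_4 * 'I_4 -> F) :
  \sum_(k < nmon2) G (val (enum_val k : mon2)) =
  \sum_(i < 4) \sum_(j < 4 | (i <= j)%N) G (i, j).
Proof.
rewrite -(big_enum_val (fun t : mon2 => G (val t))) pair_big_dep /=.
rewrite [RHS](reindex_omap (val : mon2 -> 'I_4 * 'I_4) insub) /=; last first.
  by move=> ij ij_mon; rewrite insubT.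
by apply: eq_big => [[ij ij_mon]|[[i j] ?] _] //=; rewrite insubT /= ij_mon eqxx.
Qed.

Lemma quadform_qvec l m x : quadform (qvec l m) x = (l *m x) 0 0 * (m *m x) 0 0.
Proof.
rewrite /quadform.
under eq_bigr => k _ do rewrite mxE /monval.
rewrite (sum_mon2 (fun ij => (if ij.1 == ij.2 then l 0 ij.1 * m 0 ij.1
   else l 0 ij.1 * m 0 ij.2 + l 0 ij.2 * m 0 ij.1) * (x ij.1 0 * x ij.2 0))) !mxE.
do 4 rewrite !big_mkcond !big_ord_recl !big_ord0 /= /bump /=.
ring.
Qed.

Lemma quadform_mulmx k (a : 'rV[F]_k) (C : 'M[F]_(k, nmon2)) x :
  quadform (a *m C) x = \sum_(s < k) a 0 s * quadform (row s C) x.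
Proof.
rewrite /quadform.
under eq_bigr => j _ do rewrite !mxE big_distrl /=.
rewrite exchange_big /=; apply: eq_bigr => s _; rewrite big_distrr /=.
by apply: eq_bigr => j _; rewrite mxE mulrA.
Qed.

Lemma evalmx_quadform c n (p : 'I_10 -> 'cV[F]_4) i :
  (c *m evalmx n p) 0 i = quadform c (p (inord i)).
Proof. by rewrite !mxE; apply: eq_bigr => k _; rewrite mxE. Qed.

End QuadraticForms.

Section PairQuadrics.
Variable F : fieldType.
Variable p : 'I_10 -> 'cV[F]_4.
Implicit Type x : 'cV[F]_4.

Local Notation "[ a b c d ]" := (br p a b c d)
  (a at level 0, b at level 0, c at level 0, d at level 0, format "[ a  b  c  d ]").
Local Notation P i := (pt p i).

Definition pair_quadric (s : nat) x : F :=
  [:: bracket (P 0) (P 1) (P 5) x * bracket (P 2) (P 3) (P 4) x;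
      bracket (P 0) (P 1) (P 2) x * bracket (P 3) (P 4) (P 5) x;
      bracket (P 0) (P 2) (P 4) x * bracket (P 1) (P 3) (P 5) x;
      bracket (P 0) (P 4) (P 5) x * bracket (P 1) (P 2) (P 3) x]`_s.

Definition pair_quadrics_mx : 'M[F]_(4, nmon2) := \matrix_(s < 4)
  [:: qvec (bracket_form (P 0) (P 1) (P 5)) (bracket_form (P 2) (P 3) (P 4));
      qvec (bracket_form (P 0) (P 1) (P 2)) (bracket_form (P 3) (P 4) (P 5));
      qvec (bracket_form (P 0) (P 2) (P 4)) (bracket_form (P 1) (P 3) (P 5));
      qvec (bracket_form (P 0) (P 4) (P 5)) (bracket_form (P 1) (P 2) (P 3))]`_s.

Lemma quadform_pair_quadric (s : 'I_4) x :
  quadform (row s pair_quadrics_mx) x = pair_quadric s x.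
Proof.
by rewrite rowK; case: s => -[|[|[|[|]]]] //= _; rewrite quadform_qvec -!bracket_formE.
Qed.

Lemma pair_quadric_vanish s i : (i < 6)%N -> pair_quadric s (P i) = 0.
Proof.
case: s => [|[|[|[|s]]]]; case: i => [|[|[|[|[|[|i]]]]]] //= _;
  by rewrite /pair_quadric /= ?bracket_dup1 ?bracket_dup2 ?bracket_dup3 ?mulr0 ?mul0r ?nth_nil.
Qed.

Lemma brE a b c d : [a b c d] = bracket (P a) (P b) (P c) (P d).
Proof. by []. Qed.

Ltac plucker := rewrite !brE !bracketE; ring.

Lemma plucker01 : [0 1 2 3] * [0 1 4 5] - [0 1 2 4] * [0 1 3 5] + [0 1 2 5] * [0 1 3 4] = 0.
Proof. plucker. Qed.
Lemma plucker02 : [0 1 2 3] * [0 2 4 5] - [0 1 2 4] * [0 2 3 5] + [0 1 2 5] * [0 2 3 4] = 0.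
Proof. plucker. Qed.
Lemma plucker15 : [0 1 2 5] * [1 3 4 5] - [0 1 3 5] * [1 2 4 5] + [0 1 4 5] * [1 2 3 5] = 0.
Proof. plucker. Qed.
Lemma plucker24 : [0 1 2 4] * [2 3 4 5] - [0 2 3 4] * [1 2 4 5] + [0 2 4 5] * [1 2 3 4] = 0.
Proof. plucker. Qed.
Lemma plucker34 : [0 1 3 4] * [2 3 4 5] - [0 2 3 4] * [1 3 4 5] + [0 3 4 5] * [1 2 3 4] = 0.
Proof. plucker. Qed.
Lemma plucker35 : [0 1 3 5] * [2 3 4 5] - [0 2 3 5] * [1 3 4 5] + [0 3 4 5] * [1 2 3 5] = 0.
Proof. plucker. Qed.

Local Notation II :=
  ([0 1 2 5] * [0 2 3 4] * [1 3 4 5] - [0 1 2 4] * [2 3 4 5] * [0 1 3 5]).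

Lemma II_alt : [0 1 2 3] * [0 2 4 5] * [1 3 4 5] - [0 1 2 4] * [0 3 4 5] * [1 2 3 5] = - II.
Proof.
by apply: (eq_lincomb2 (c1 := [1 3 4 5]) (c2 := - [0 1 2 4]) plucker02 plucker35); ring.
Qed.

Lemma minor_0134 : [0 1 2 3] * [0 1 4 5] * [0 2 3 4] * [1 3 4 5]
  - [0 1 2 4] * [0 1 3 5] * [0 3 4 5] * [1 2 3 4] = - ([0 1 3 4] * II).
Proof.
apply: (eq_lincomb2 (c1 := [0 2 3 4] * [1 3 4 5]) (c2 := - ([0 1 2 4] * [0 1 3 5]))
  plucker01 plucker34); ring.
Qed.

Lemma minor_1245 : [0 1 2 4] * [0 1 4 5] * [1 2 3 5] * [2 3 4 5]
  - [0 1 2 5] * [0 2 4 5] * [1 2 3 4] * [1 3 4 5] = - ([1 2 4 5] * II).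
Proof.
apply: (eq_lincomb2 (c1 := - ([0 1 2 5] * [1 3 4 5])) (c2 := [0 1 2 4] * [2 3 4 5])
  plucker24 plucker15); ring.
Qed.

Section Pencil.
Variables a0 a1 a2 a3 : F.
Hypothesis pencil_eq0 : forall x, a0 * pair_quadric 0 x + a1 * pair_quadric 1 x
  + a2 * pair_quadric 2 x + a3 * pair_quadric 3 x = 0.

Ltac pencil_at x y :=
  apply/eqP; rewrite -subr_eq0 -(pencil_eq0 (x + y)) /pair_quadric /=;
  rewrite !bracketD ?bracket_dup1 ?bracket_dup2 ?bracket_dup3 ?(mulr0, mul0r, addr0, add0r);
  rewrite !brE !bracketE;
  apply/eqP; ring.

Lemma pencil01 : - [0 1 2 4] * [0 1 3 5] * a2 = [0 1 2 3] * [0 1 4 5] * a3.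
Proof. pencil_at (P 0) (P 1). Qed.
Lemma pencil02 : [0 1 2 5] * [0 2 3 4] * a0 = [0 1 2 3] * [0 2 4 5] * a3.
Proof. pencil_at (P 0) (P 2). Qed.
Lemma pencil04 : [0 1 4 5] * [0 2 3 4] * a0 = [0 1 2 4] * [0 3 4 5] * a1.
Proof. pencil_at (P 0) (P 4). Qed.
Lemma pencil12 : [0 1 2 5] * [1 2 3 4] * a0 = - [0 1 2 4] * [1 2 3 5] * a2.
Proof. pencil_at (P 1) (P 2). Qed.
Lemma pencil13 : [0 1 3 5] * [1 2 3 4] * a0 = [0 1 2 3] * [1 3 4 5] * a1.
Proof. pencil_at (P 1) (P 3). Qed.
Lemma pencil15 : [0 1 4 5] * [1 2 3 5] * a3 = [0 1 2 5] * [1 3 4 5] * a1.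
Proof. pencil_at (P 1) (P 5). Qed.
Lemma pencil24 : [0 2 4 5] * [1 2 3 4] * a3 = [0 1 2 4] * [2 3 4 5] * a1.
Proof. pencil_at (P 2) (P 4). Qed.
Lemma pencil34 : [0 2 3 4] * [1 3 4 5] * a2 = - [0 3 4 5] * [1 2 3 4] * a3.
Proof. pencil_at (P 3) (P 4). Qed.
Lemma pencil35 : [0 3 4 5] * [1 2 3 5] * a3 = [0 1 3 5] * [2 3 4 5] * a0.
Proof. pencil_at (P 3) (P 5). Qed.
Lemma pencil45 : - [0 1 4 5] * [2 3 4 5] * a0 = [0 2 4 5] * [1 3 4 5] * a2.
Proof. pencil_at (P 4) (P 5). Qed.

Lemma pencil_1234 : [1 2 3 4] * II * a3 = 0.
Proof.
rewrite -[II]opprK -II_alt.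
by apply: (eq_lincomb3 (c1 := - ([0 2 3 4] * [1 3 4 5])) (c2 := [1 2 3 4] * [1 3 4 5])
  (c3 := [0 1 2 4] * [1 2 3 5]) pencil12 pencil02 pencil34); ring.
Qed.

Lemma pencil_trivial_0134 : [0 1 3 4] != 0 -> II != 0 ->
  [/\ a0 = 0, a1 = 0, a2 = 0 & a3 = 0].
Proof.
move=> b0134 II0.
have [a2_0 a3_0] : a2 = 0 /\ a3 = 0.
  apply: (cramer2 (d := [0 1 3 4] * II) pencil01 pencil34); last exact: mulf_neq0.
  by rewrite -[RHS]opprK -minor_0134; ring.
have [a0_0 a1_0] : a0 = 0 /\ a1 = 0.
  apply: (cramer2 (d := - ([0 1 3 4] * II)) pencil04 pencil13).
    by rewrite -minor_0134; ring.
  by rewrite oppr_eq0 mulf_neq0.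
by [].
Qed.

Lemma pencil_trivial_1245 : [1 2 4 5] != 0 -> II != 0 ->
  [/\ a0 = 0, a1 = 0, a2 = 0 & a3 = 0].
Proof.
move=> b1245 II0.
have [a0_0 a2_0] : a0 = 0 /\ a2 = 0.
  apply: (cramer2 (d := [1 2 4 5] * II) pencil12 pencil45); last exact: mulf_neq0.
  by rewrite -[RHS]opprK -minor_1245; ring.
have [a3_0 a1_0] : a3 = 0 /\ a1 = 0.
  apply: (cramer2 (d := - ([1 2 4 5] * II)) pencil15 pencil24).
    by rewrite -minor_1245; ring.
  by rewrite oppr_eq0 mulf_neq0.
by [].
Qed.

Lemma pencil_trivial : II != 0 -> [/\ a0 = 0, a1 = 0, a2 = 0 & a3 = 0].
Proof.
move=> II0.
have [b0134|] := eqVneq [0 1 3 4] 0; last by move/pencil_trivial_0134; apply.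
have [b1245|] := eqVneq [1 2 4 5] 0; last by move/pencil_trivial_1245; apply.
have a3_0 : [1 2 3 4] != 0 -> a3 = 0.
  by move=> b1234; apply/eqP; move/eqP: pencil_1234; rewrite !mulf_eq0 (negbTE b1234) (negbTE II0).
have [t1_0|] := eqVneq ([0 1 2 5] * [0 2 3 4] * [1 3 4 5]) 0.
  have : [0 1 2 4] * [2 3 4 5] * [0 1 3 5] != 0 by move: II0; rewrite t1_0 sub0r oppr_eq0.
  rewrite !mulf_eq0 !negb_or => /andP[/andP[b0124 b2345] b0135].
  have {}a3_0 : a3 = 0.
    apply/a3_0/(contra_neq _ (mulf_neq0 b0124 b2345)) => b1234.
    by rewrite -plucker24 b1245 b1234 !mulr0 subr0 addr0.
  split=> //.
  - by apply: (mulfI (mulf_neq0 b0135 b2345)); rewrite mulr0 -pencil35 a3_0 mulr0.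
  - by apply: (mulfI (mulf_neq0 b0124 b2345)); rewrite mulr0 -pencil24 a3_0 mulr0.
  - have b0124_0135 : - [0 1 2 4] * [0 1 3 5] != 0 by rewrite mulf_neq0 ?oppr_eq0.
    by apply: (mulfI b0124_0135); rewrite mulr0 pencil01 a3_0 mulr0.
rewrite !mulf_eq0 !negb_or => /andP[/andP[b0125 b0234] b1345].
have {}a3_0 : a3 = 0.
  apply/a3_0/(contra_neq _ (mulf_neq0 b0234 b1345)) => b1234.
  by move: plucker34; rewrite b0134 b1234 mul0r mulr0 sub0r addr0 => /eqP; rewrite oppr_eq0 => /eqP.
split=> //.
- by apply: (mulfI (mulf_neq0 b0125 b0234)); rewrite mulr0 pencil02 a3_0 mulr0.
- by apply: (mulfI (mulf_neq0 b0125 b1345)); rewrite mulr0 -pencil15 a3_0 mulr0.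
- by apply: (mulfI (mulf_neq0 b0234 b1345)); rewrite mulr0 pencil34 a3_0 mulr0.
Qed.

End Pencil.

Lemma pair_quadrics_mx_free : II != 0 -> row_free pair_quadrics_mx.
Proof.
move=> II0; apply/inj_row_free => a aQ0.
have pencil_eq0 x : a 0 (inord 0) * pair_quadric 0 x + a 0 (inord 1) * pair_quadric 1 x
    + a 0 (inord 2) * pair_quadric 2 x + a 0 (inord 3) * pair_quadric 3 x = 0.
  have := congr1 (fun c => quadform c x) aQ0; rewrite quadform_mulmx.
  under eq_bigr => s _ do rewrite quadform_pair_quadric -[s in a 0 s]inord_val.
  rewrite !big_ord_recl big_ord0 /= /bump /= addr0 !addrA (_ : quadform 0 x = 0); first exact.
  by rewrite /quadform big1 // => k _; rewrite mxE mul0r.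
have [a0 a1 a2 a3] := pencil_trivial pencil_eq0 II0.
apply/rowP => s; rewrite -[s]inord_val mxE.
by case: s => -[|[|[|[|//]]]].
Qed.

Lemma quadform_pair_quadrics_Mmx (D : 'rV[F]_4) (r : 'I_4) :
  quadform (D *m pair_quadrics_mx) (P (r + 6)) = (D *m (Mmx p)^T) 0 r.
Proof.
rewrite quadform_mulmx mxE; apply: eq_bigr => s _.
by rewrite quadform_pair_quadric !mxE.
Qed.

Lemma quadform_pair_quadrics_vanish (D : 'rV[F]_4) i :
  (i < 6)%N -> quadform (D *m pair_quadrics_mx) (P i) = 0.
Proof.
move=> i_lt6; rewrite quadform_mulmx big1 // => s _.
by rewrite quadform_pair_quadric pair_quadric_vanish ?mulr0.
Qed.

Lemma pair_quadrics_mx_ker : (pair_quadrics_mx <= kermx (evalmx 6 p))%MS.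
Proof.
apply/sub_kermxP/row_matrixP => s; rewrite row_mul row0; apply/rowP => i.
by rewrite evalmx_quadform quadform_pair_quadric mxE pair_quadric_vanish.
Qed.

End PairQuadrics.

Theorem mainTheorem6 (R : realType) (p : 'I_10 -> 'cV[R[i]]_4) :
  (forall k, p k != 0) ->
  \rank (kermx (evalmx 6 p)) = 4%N ->
  br p 0 1 2 5 * br p 0 2 3 4 * br p 1 3 4 5
    - br p 0 1 2 4 * br p 2 3 4 5 * br p 0 1 3 5 != 0 ->
  ((exists c : 'rV[R[i]]_(nmon2), c != 0 /\ forall k, quadform c (p k) = 0)
   <-> \det (Mmx p) = 0).
Proof.
move=> _ rank_ker II0.
have Q_free := pair_quadrics_mx_free II0.
have QK := pair_quadrics_mx_ker p.
have KQ : (kermx (evalmx 6 p) <= pair_quadrics_mx p)%MS.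
  by rewrite -(mxrank_leqif_sup QK).2 rank_ker (eqP Q_free).
split=> [[c [c_neq0 c_vanish]]|det0].
  have /submxP[D c_def] : (c <= pair_quadrics_mx p)%MS.
    apply: submx_trans KQ; apply/sub_kermxP/rowP => i.
    by rewrite evalmx_quadform c_vanish mxE.
  subst c.
  apply/eqP; rewrite -det_tr; apply/det0P; exists D.
    by apply: contraNneq c_neq0 => ->; rewrite mul0mx.
  apply/rowP => r; rewrite -quadform_pair_quadrics_Mmx mxE; exact: c_vanish.
have /det0P[D D_neq0 DM0] : \det (Mmx p)^T == 0 by rewrite det_tr det0.
exists (D *m pair_quadrics_mx p); split=> [|k]; first by rewrite mulmx_free_eq0.
rewrite -[k]inord_val; case: (ltnP k 6) => [/quadform_pair_quadrics_vanish //|k_ge6].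
have r_lt4 : (k - 6 < 4)%N by rewrite ltn_subLR.
by rewrite -(subnK k_ge6) -[(k - 6)%N]/(Ordinal r_lt4 : nat) quadform_pair_quadrics_Mmx DM0 mxE.
Qed.
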